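(* Assume (AC1) holds and $(\xi_i)_{i=1}^k$ is a family of vector fields as in (AC3). Then for every $u\in\mathcal A$ and every $d\in\mathcal H$ with $d\perp C_u$, $$\sum_{i=1}^k\langle u,\xi_i(u)\rangle\,\xi_i'(u)[d]=d-\sum_{i=1}^k\langle u,\xi_i'(u)[d]\rangle\,\xi_i(u).$$
   Context: $\mathcal H$ is a real Hilbert space with inner product $\langle\cdot,\cdot\rangle$; $\mathcal A\subset\mathcal H$ open; for each $u\in\mathcal A$, $C_u$ is a closed cone; $\operatorname{span}C$ is the smallest closed subspace containing $C$, $\operatorname{int}C$ the interior of $C$ relative to $\operatorname{span}C$; $d\perp C$ means $d\perp\operatorname{span}C$; $\phi:\mathcal A\to\mathcal A$ is a given map. (AC1): for all $u\in\mathcal A$, $u\in C_u$. (AC3): there exist a closed subspace $E\subset\mathcal H$ and $C^1$ maps $\xi_i:\mathcal A\to E^\perp$, $i=1,\dots,k$, such that for all $u\in\mathcal A$ and all $i$: (i) $(\xi_i(u))_{i=1}^k$ is orthonormal; (ii) for all $v\in V_u:=\operatorname{span}\{\xi_1(u),\dots,\xi_k(u)\}$, $\xi_i'(u)[v]\in V_u$; (iii) $\xi_i(v)=\xi_i(u)$ for all $v\in\operatorname{int}C_u\cap\mathcal A$; (iv) $\langle u,\xi_i(u)\rangle\ne0$; (v) there is $r>0$ such that $\xi_i'$ is bounded on $\{u\in\mathcal A:\operatorname{dist}(u,\operatorname{Ran}\phi)<r\}$; and $C_u:=E\oplus\{\sum_i t_i\xi_i(u): t_i\ge0\}$. *)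

From Stdlib Require Import Reals.
Open Scope R_scope.

Record HilbertSpace := {
  hcar :> Type;
  hzero : hcar;
  hadd : hcar -> hcar -> hcar;
  hopp : hcar -> hcar;
  hscal : R -> hcar -> hcar;
  hinner : hcar -> hcar -> R;
  hadd_assoc : forall x y z, hadd x (hadd y z) = hadd (hadd x y) z;
  hadd_comm : forall x y, hadd x y = hadd y x;
  hadd_zero : forall x, hadd x hzero = x;
  hadd_opp : forall x, hadd x (hopp x) = hzero;
  hscal_one : forall x, hscal 1 x = x;
  hscal_assoc : forall a b x, hscal a (hscal b x) = hscal (a * b) x;
  hscal_distr_l : forall a x y, hscal a (hadd x y) = hadd (hscal a x) (hscal a y);
  hscal_distr_r : forall a b x, hscal (a + b) x = hadd (hscal a x) (hscal b x);
  hinner_sym : forall x y, hinner x y = hinner y x;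
  hinner_add_l : forall x y z, hinner (hadd x y) z = hinner x z + hinner y z;
  hinner_scal_l : forall a x y, hinner (hscal a x) y = a * hinner x y;
  hinner_pos : forall x, 0 <= hinner x x;
  hinner_def : forall x, hinner x x = 0 -> x = hzero;
  hcomplete : forall s : nat -> hcar,
    (forall eps, eps > 0 -> exists N, forall m n, (m >= N)%nat -> (n >= N)%nat ->
        sqrt (hinner (hadd (s m) (hopp (s n))) (hadd (s m) (hopp (s n)))) < eps) ->
    exists l, forall eps, eps > 0 -> exists N, forall n, (n >= N)%nat ->
        sqrt (hinner (hadd (s n) (hopp l)) (hadd (s n) (hopp l))) < eps
}.

Arguments hzero {h}.
Arguments hadd {h}.
Arguments hopp {h}.
Arguments hscal {h}.
Arguments hinner {h}.

Section Hilb.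
Variable H : HilbertSpace.

Definition hsub (x y : H) : H := hadd x (hopp y).
Definition hnorm (x : H) : R := sqrt (hinner x x).

Fixpoint hsum (k : nat) (f : nat -> H) : H :=
  match k with
  | O => hzero
  | S k' => hadd (hsum k' f) (f k')
  end.

Definition is_open (A : H -> Prop) : Prop :=
  forall u, A u -> exists r, r > 0 /\ forall v, hnorm (hsub v u) < r -> A v.

Definition seq_lim (s : nat -> H) (l : H) : Prop :=
  forall eps, eps > 0 -> exists N, forall n, (n >= N)%nat -> hnorm (hsub (s n) l) < eps.

Definition is_closed (S : H -> Prop) : Prop :=
  forall s l, (forall n, S (s n)) -> seq_lim s l -> S l.

Definition is_subspace (S : H -> Prop) : Prop :=
  S hzero /\ (forall x y, S x -> S y -> S (hadd x y)) /\
  (forall a x, S x -> S (hscal a x)).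

Definition is_closed_subspace (S : H -> Prop) : Prop :=
  is_subspace S /\ is_closed S.

Definition span (C : H -> Prop) (x : H) : Prop :=
  forall S, is_closed_subspace S -> (forall y, C y -> S y) -> S x.

Definition rel_int (C : H -> Prop) (x : H) : Prop :=
  C x /\ exists r, r > 0 /\ forall y, span C y -> hnorm (hsub y x) < r -> C y.

Definition perp (d : H) (C : H -> Prop) : Prop :=
  forall y, span C y -> hinner d y = 0.

Definition orth_compl (E : H -> Prop) (x : H) : Prop :=
  forall e, E e -> hinner x e = 0.

Definition is_linear (L : H -> H) : Prop :=
  (forall x y, L (hadd x y) = hadd (L x) (L y)) /\
  (forall a x, L (hscal a x) = hscal a (L x)).

Definition is_bounded_linear (L : H -> H) : Prop :=
  is_linear L /\ exists M, forall h, hnorm (L h) <= M * hnorm h.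

Definition frechet_deriv (f : H -> H) (u : H) (L : H -> H) : Prop :=
  is_bounded_linear L /\
  forall eps, eps > 0 -> exists delta, delta > 0 /\
    forall h, hnorm h < delta ->
      hnorm (hsub (hsub (f (hadd u h)) (f u)) (L h)) <= eps * hnorm h.

Definition is_C1_on (A : H -> Prop) (f : H -> H) (Df : H -> H -> H) : Prop :=
  (forall u, A u -> frechet_deriv f u (Df u)) /\
  (forall u, A u -> forall eps, eps > 0 -> exists delta, delta > 0 /\
     forall v, A v -> hnorm (hsub v u) < delta ->
       forall h, hnorm (hsub (Df v h) (Df u h)) <= eps * hnorm h).

(* V_u := span{ xi_0(u), ..., xi_(k-1)(u) } (finite-dim, hence closed) *)
Definition Vspan (k : nat) (xi : nat -> H -> H) (u : H) (v : H) : Prop :=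
  exists c : nat -> R, v = hsum k (fun j => hscal (c j) (xi j u)).

Definition Ccone (E : H -> Prop) (k : nat) (xi : nat -> H -> H) (u : H) (x : H) : Prop :=
  exists e (t : nat -> R), E e /\ (forall i, (i < k)%nat -> 0 <= t i) /\
    x = hadd e (hsum k (fun i => hscal (t i) (xi i u))).

Definition dist_ran_lt (A : H -> Prop) (phi : H -> H) (u : H) (r : R) : Prop :=
  exists w, A w /\ hnorm (hsub u (phi w)) < r.

Definition AC3 (A : H -> Prop) (phi : H -> H) (E : H -> Prop) (k : nat)
    (xi : nat -> H -> H) (Dxi : nat -> H -> H -> H) : Prop :=
  is_closed_subspace E /\
  (forall i, (i < k)%nat ->
     is_C1_on A (xi i) (Dxi i) /\
     (forall u, A u -> orth_compl E (xi i u))) /\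
  (forall u, A u ->
     (forall i j, (i < k)%nat -> (j < k)%nat ->
        hinner (xi i u) (xi j u) = if Nat.eqb i j then 1 else 0) /\
     (forall i, (i < k)%nat -> forall v, Vspan k xi u v -> Vspan k xi u (Dxi i u v)) /\
     (forall i, (i < k)%nat -> forall v,
        rel_int (Ccone E k xi u) v -> A v -> xi i v = xi i u) /\
     (forall i, (i < k)%nat -> hinner u (xi i u) <> 0)) /\
  (exists r, r > 0 /\ forall i, (i < k)%nat -> exists M, forall u, A u ->
     dist_ran_lt A phi u r -> forall h, hnorm (Dxi i u h) <= M * hnorm h).

Definition AC1 (A : H -> Prop) (C : H -> H -> Prop) : Prop :=
  forall u, A u -> C u u.

End Hilb.

Arguments hsub {H}.
Arguments hnorm {H}.
Arguments hsum {H}.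

From Stdlib Require Import Reals Lra Psatz.
Open Scope R_scope.

(* Put v(t) = u + t d; since A is open, v(t) ∈ A for |t| small.
   By (AC1), v(t) ∈ C_{v(t)}, i.e. v(t) = e + Σ_i s_i ξ_i(v(t)) with e ∈ E, and by
   orthonormality and ξ_i(v(t)) ⟂ E the coefficients are s_i = ⟨v(t), ξ_i(v(t))⟩.
   Consequently, for every z ⟂ E the real function
       G_z(t) = ⟨z, v(t)⟩ - Σ_i ⟨v(t), ξ_i(v(t))⟩ ⟨z, ξ_i(v(t))⟩
   vanishes near 0, hence G_z'(0) = 0.  Differentiating with the product rule and
   the Fréchet derivatives ξ_i'(u), and using ⟨d, ξ_i(u)⟩ = 0 (as ξ_i(u) ∈ C_u),
   gives ⟨z, d - Y - X⟩ = 0, where X and Y are the two sums of the theorem.  The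
   vector w = X - (d - Y) is itself orthogonal to E (d ⟂ E ⊂ C_u, ξ_i(u) ⟂ E, and
   ξ_i'(u)[d] ⟂ E because ξ_i takes values in E^⊥ near u), so z = w gives
   ⟨w, w⟩ = 0 and w = 0.
   The file develops finite real sums, inner-product algebra, two calculus facts
   (locally vanishing functions and directional derivatives), the orthogonality
   facts about the cone C_u, the identity under exactly the parts of (AC1) and
   (AC3) it needs, and finally the theorem. *)

Fixpoint rsum (k : nat) (f : nat -> R) : R :=
  match k with O => 0 | S k' => rsum k' f + f k' end.

Lemma rsum_ext k f g : (forall i, (i < k)%nat -> f i = g i) -> rsum k f = rsum k g.
Proof. induction k; simpl; intros; auto. rewrite IHk, H; auto. Qed.

Lemma rsum_plus k f g : rsum k (fun i => f i + g i) = rsum k f + rsum k g.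
Proof. induction k; simpl; [lra|]. rewrite IHk; lra. Qed.

Lemma rsum_zero k f : (forall i, (i < k)%nat -> f i = 0) -> rsum k f = 0.
Proof. induction k; simpl; intros Hf; [lra|]. rewrite IHk, Hf; auto; lra. Qed.

Lemma rsum_delta k g i : (i < k)%nat ->
  rsum k (fun j => (if Nat.eqb j i then 1 else 0) * g j) = g i.
Proof.
  induction k; intros Hi; [lia|]. simpl.
  destruct (Nat.eq_dec i k) as [->|Hne].
  - rewrite Nat.eqb_refl, rsum_zero; [lra|].
    intros j Hj. replace (Nat.eqb j k) with false; [lra|].
    symmetry; apply Nat.eqb_neq; lia.
  - rewrite IHk by lia. replace (Nat.eqb k i) with false; [lra|].
    symmetry; apply Nat.eqb_neq; lia.
Qed.

Lemma derivable_pt_lim_locally_zero f r l :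
  0 < r -> (forall t, -r < t < r -> f t = 0) -> derivable_pt_lim f 0 l -> l = 0.
Proof.
  intros Hr Hf Hd.
  apply (uniqueness_limite f 0); [exact Hd|].
  apply (derivable_pt_lim_locally_ext (fun _ => 0) f 0 (-r) r); [lra| |].
  - intros z Hz; symmetry; apply Hf; exact Hz.
  - apply derivable_pt_lim_const.
Qed.

Lemma derivable_pt_lim_affine a b : derivable_pt_lim (fun t => a + t * b) 0 b.
Proof.
  pose proof (derivable_pt_lim_plus (fun _ => a) _ 0 _ _ (derivable_pt_lim_const a 0)
    (derivable_pt_lim_mult (fun t => t) (fun _ => b) 0 _ _
       (derivable_pt_lim_id 0) (derivable_pt_lim_const b 0))) as Hd.
  cbv beta in Hd. replace (0 + (1 * b + 0 * 0)) with b in Hd by ring. exact Hd.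
Qed.

Lemma derivable_pt_lim_rsum (F : nat -> R -> R) (l : nat -> R) x n :
  (forall i, (i < n)%nat -> derivable_pt_lim (F i) x (l i)) ->
  derivable_pt_lim (fun t => rsum n (fun i => F i t)) x (rsum n l).
Proof.
  induction n as [|n IH]; intros Hd; simpl.
  - apply derivable_pt_lim_const.
  - apply (derivable_pt_lim_plus (fun t => rsum n (fun i => F i t)) (F n)); auto.
Qed.

Section HilbertSpaceFacts.
Variable H : HilbertSpace.

Lemma hscal_zero (x : H) : hscal 0 x = hzero.
Proof.
  pose proof (hscal_distr_r H 0 0 x) as Hdouble. rewrite Rplus_0_r in Hdouble.
  set (a := hscal 0 x) in *.
  transitivity (hadd (hadd a a) (hopp a)).
  - rewrite <- hadd_assoc, hadd_opp, hadd_zero; auto.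
  - rewrite <- Hdouble. apply hadd_opp.
Qed.

Lemma hinner_zero_l (y : H) : hinner hzero y = 0.
Proof. rewrite <- (hscal_zero hzero), hinner_scal_l. lra. Qed.

Lemma hinner_zero_r (y : H) : hinner y hzero = 0.
Proof. rewrite hinner_sym; apply hinner_zero_l. Qed.

Lemma hinner_add_r (x y z : H) : hinner x (hadd y z) = hinner x y + hinner x z.
Proof. rewrite hinner_sym, hinner_add_l, (hinner_sym _ y), (hinner_sym _ z); auto. Qed.

Lemma hinner_scal_r a (x y : H) : hinner x (hscal a y) = a * hinner x y.
Proof. rewrite hinner_sym, hinner_scal_l, hinner_sym; auto. Qed.

Lemma hinner_sub_l (x y z : H) : hinner (hsub x y) z = hinner x z - hinner y z.
Proof.
  unfold hsub. pose proof (hinner_add_l H y (hopp y) z) as Hopp.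
  rewrite hadd_opp, hinner_zero_l in Hopp. rewrite hinner_add_l; lra.
Qed.

Lemma hinner_sub_r (x y z : H) : hinner z (hsub x y) = hinner z x - hinner z y.
Proof. rewrite hinner_sym, hinner_sub_l, !(hinner_sym _ z); auto. Qed.

Lemma hinner_sum_r (z : H) k f : hinner z (hsum k f) = rsum k (fun i => hinner z (f i)).
Proof. induction k; simpl. apply hinner_zero_r. rewrite hinner_add_r, IHk; auto. Qed.

Lemma hinner_sum_l (z : H) k f : hinner (hsum k f) z = rsum k (fun i => hinner (f i) z).
Proof. rewrite hinner_sym, hinner_sum_r. apply rsum_ext; intros; apply hinner_sym. Qed.

Lemma hsub_zero_eq (x y : H) : hsub x y = hzero -> x = y.
Proof.
  unfold hsub; intros Hxy.
  rewrite <- (hadd_zero H x), <- (hadd_opp H y), (hadd_comm H y), hadd_assoc, Hxy.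
  rewrite hadd_comm, hadd_zero; auto.
Qed.

Lemma hsub_add_cancel (u y : H) : hsub (hadd u y) u = y.
Proof. unfold hsub. rewrite (hadd_comm H u y), <- hadd_assoc, hadd_opp, hadd_zero; auto. Qed.

Lemma hadd_scal_zero (u d : H) : hadd u (hscal 0 d) = u.
Proof. rewrite hscal_zero, hadd_zero; auto. Qed.

Lemma hsum_scal_zero k (f : nat -> H) : hsum k (fun i => hscal 0 (f i)) = hzero.
Proof. induction k; simpl; auto. rewrite IHk, hscal_zero, hadd_zero; auto. Qed.

Lemma hnorm_nonneg (x : H) : 0 <= hnorm x.
Proof. apply sqrt_pos. Qed.

Lemma hnorm_scal t (d : H) : hnorm (hscal t d) = Rabs t * hnorm d.
Proof.
  unfold hnorm. rewrite hinner_scal_l, hinner_scal_r, <- Rmult_assoc.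
  rewrite sqrt_mult, <- sqrt_Rsqr_abs; [reflexivity|apply Rle_0_sqr|apply hinner_pos].
Qed.

Lemma cauchy_schwarz (x y : H) : Rabs (hinner x y) <= hnorm x * hnorm y.
Proof.
  set (a := hinner x x). set (b := hinner y y). set (c := hinner x y).
  assert (Ha : 0 <= a) by apply hinner_pos.
  assert (Hb : 0 <= b) by apply hinner_pos.
  assert (Hc : c * c <= a * b).
  { destruct (Req_dec b 0) as [Hb0|Hb0].
    - apply hinner_def in Hb0. unfold c. rewrite Hb0, hinner_zero_r. nra.
    - (* expand 0 <= ⟨x + t y, x + t y⟩ at t = -c/b *)
      set (t := - c / b).
      assert (Htb : t * b = - c) by (unfold t; field; auto).
      pose proof (hinner_pos H (hadd x (hscal t y))) as Hsq.
      rewrite hinner_add_l, !hinner_add_r, !hinner_scal_l, !hinner_scal_r in Hsq.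
      rewrite (hinner_sym H y x) in Hsq. fold a b c in Hsq. nra. }
  unfold hnorm. fold a b.
  rewrite <- sqrt_mult, <- sqrt_Rsqr_abs by auto.
  apply sqrt_le_1_alt. unfold Rsqr. lra.
Qed.

Lemma open_contains_segment (A : H -> Prop) (u d : H) :
  is_open H A -> A u -> exists r, r > 0 /\ forall t, -r < t < r -> A (hadd u (hscal t d)).
Proof.
  intros Hopen HuA. destruct (Hopen u HuA) as [r0 [Hr0 HA]].
  pose proof (hnorm_nonneg d) as Hd.
  exists (r0 / (hnorm d + 1)). split; [apply Rdiv_lt_0_compat; lra|].
  intros t Ht. apply HA. rewrite hsub_add_cancel, hnorm_scal.
  assert (Habs : Rabs t < r0 / (hnorm d + 1)) by (apply Rabs_def1; lra).
  apply (Rmult_lt_compat_r (hnorm d + 1)) in Habs; [|lra].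
  unfold Rdiv in Habs. rewrite Rmult_assoc, Rinv_l in Habs by lra.
  pose proof (Rabs_pos t). nra.
Qed.

Lemma frechet_directional_inner (g : H -> H) (u : H) (L : H -> H) (z d : H) :
  frechet_deriv H g u L ->
  derivable_pt_lim (fun t => hinner z (g (hadd u (hscal t d)))) 0 (hinner z (L d)).
Proof.
  intros [[[_ Lscal] _] Hfr] eps Heps.
  set (N := hnorm z). set (D := hnorm d).
  assert (HN : 0 <= N) by apply hnorm_nonneg.
  assert (HD : 0 <= D) by apply hnorm_nonneg.
  set (eps' := eps / ((N + 1) * (D + 1))).
  assert (Heps' : eps' > 0) by (unfold eps'; apply Rdiv_lt_0_compat; nra).
  assert (Heps'_eq : eps' * ((N + 1) * (D + 1)) = eps) by (unfold eps'; field; lra).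
  destruct (Hfr eps' Heps') as [delta [Hdelta Hrem]].
  assert (Hstep : 0 < delta / (D + 1)) by (apply Rdiv_lt_0_compat; lra).
  exists (mkposreal _ Hstep). intros h Hh0 Hh. simpl in Hh.
  rewrite Rplus_0_l, hadd_scal_zero.
  assert (Habs : 0 < Rabs h) by (apply Rabs_pos_lt; auto).
  assert (Hsmall : Rabs h * D < delta).
  { apply (Rmult_lt_compat_r (D + 1)) in Hh; [|lra].
    unfold Rdiv in Hh. rewrite Rmult_assoc, Rinv_l in Hh; nra. }
  specialize (Hrem (hscal h d)). rewrite hnorm_scal in Hrem. fold D in Hrem.
  specialize (Hrem Hsmall).
  set (rem := hsub (hsub (g (hadd u (hscal h d))) (g u)) (L (hscal h d))) in Hrem.
  assert (Hquot : (hinner z (g (hadd u (hscal h d))) - hinner z (g u)) / h - hinner z (L d)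
                  = hinner z rem / h).
  { unfold rem. rewrite !hinner_sub_r, Lscal, hinner_scal_r. field; auto. }
  rewrite Hquot. unfold Rdiv. rewrite Rabs_mult, Rabs_inv.
  pose proof (cauchy_schwarz z rem) as Hcs. fold N in Hcs.
  assert (Hrem_pos : 0 <= hnorm rem) by apply hnorm_nonneg.
  assert (Hbound : Rabs (hinner z rem) < eps * Rabs h).
  { assert (N * hnorm rem <= N * (eps' * (Rabs h * D))) by (apply Rmult_le_compat_l; auto).
    assert (N * D < (N + 1) * (D + 1)) by nra.
    nra. }
  apply (Rmult_lt_reg_r (Rabs h)); auto.
  rewrite Rmult_assoc, Rinv_l by lra. lra.
Qed.

Lemma frechet_directional_self_inner (g : H -> H) (u : H) (L : H -> H) (d : H) :
  frechet_deriv H g u L ->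
  derivable_pt_lim (fun t => hinner (hadd u (hscal t d)) (g (hadd u (hscal t d)))) 0
    (hinner u (L d) + hinner d (g u)).
Proof.
  intros Hfr.
  apply (derivable_pt_lim_ext
           (fun t => hinner u (g (hadd u (hscal t d)))
                     + t * hinner d (g (hadd u (hscal t d))))).
  { intros t. rewrite hinner_add_l, hinner_scal_l; reflexivity. }
  replace (hinner u (L d) + hinner d (g u))
    with (hinner u (L d) + (1 * hinner d (g (hadd u (hscal 0 d))) + 0 * hinner d (L d)))
    by (rewrite hadd_scal_zero; ring).
  apply derivable_pt_lim_plus; [apply frechet_directional_inner; exact Hfr|].
  apply (derivable_pt_lim_mult (fun t => t)); [apply derivable_pt_lim_id|].
  apply frechet_directional_inner; exact Hfr.
Qed.

Lemma perp_elem (C : H -> Prop) (d y : H) : perp H d C -> C y -> hinner d y = 0.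
Proof. intros Hperp Hy. apply Hperp. intros S _ HS. apply HS; exact Hy. Qed.

End HilbertSpaceFacts.

Section ConeIdentity.
Variable H : HilbertSpace.
Variables (A : H -> Prop) (E : H -> Prop) (k : nat).
Variables (xi : nat -> H -> H) (Dxi : nat -> H -> H -> H).

Definition orthonormal_at (v : H) : Prop :=
  forall i j, (i < k)%nat -> (j < k)%nat ->
    hinner (xi i v) (xi j v) = if Nat.eqb i j then 1 else 0.

Hypothesis E_zero : E hzero.
Hypothesis xi_orth_E : forall v, A v -> forall i, (i < k)%nat -> orth_compl H E (xi i v).
Hypothesis xi_orthonormal : forall v, A v -> orthonormal_at v.

Let C := Ccone H E k xi.

(* E and each ξ_i(u) lie in the cone C_u, so d ⟂ C_u is orthogonal to them. *)
Lemma perp_cone_E (u d : H) : perp H d (C u) -> orth_compl H E d.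
Proof.
  intros Hperp e He. rewrite <- (hadd_zero H e) at 1.
  apply (perp_elem H (C u)); [exact Hperp|].
  exists e, (fun _ => 0). repeat split; auto; [intros; lra|].
  rewrite hsum_scal_zero; reflexivity.
Qed.

Lemma perp_cone_xi (u d : H) i : (i < k)%nat -> perp H d (C u) -> hinner d (xi i u) = 0.
Proof.
  intros Hi Hperp.
  set (delta := fun j => if Nat.eqb j i then 1 else 0).
  assert (Hcone : C u (hadd hzero (hsum k (fun j => hscal (delta j) (xi j u))))).
  { exists hzero, delta. split; [exact E_zero|split; [|reflexivity]].
    intros j _; unfold delta; destruct (Nat.eqb j i); lra. }
  pose proof (perp_elem H _ _ _ Hperp Hcone) as Hzero.
  rewrite hinner_add_r, hinner_zero_r, hinner_sum_r in Hzero.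
  rewrite (rsum_ext k _ (fun j => delta j * hinner d (xi j u))) in Hzero
    by (intros; apply hinner_scal_r).
  unfold delta in Hzero. rewrite rsum_delta in Hzero by exact Hi. lra.
Qed.

Lemma cone_inner_expansion (v x z : H) :
  A v -> C v x -> orth_compl H E z ->
  hinner z x = rsum k (fun i => hinner x (xi i v) * hinner z (xi i v)).
Proof.
  intros HvA [e [s [He [_ ->]]]] Hz.
  rewrite hinner_add_r, (Hz e He), hinner_sum_r.
  rewrite Rplus_0_l. apply rsum_ext. intros i Hi.
  rewrite hinner_scal_r. f_equal.
  rewrite hinner_add_l, (hinner_sym _ e), xi_orth_E, hinner_sum_l by auto.
  rewrite (rsum_ext k _ (fun j => (if Nat.eqb j i then 1 else 0) * s j)).
  - rewrite rsum_delta by exact Hi. lra.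
  - intros j Hj. rewrite hinner_scal_l, xi_orthonormal; auto. lra.
Qed.

Variable u : H.
Hypothesis u_in_A : A u.
Hypothesis A_open : is_open H A.
Hypothesis xi_frechet : forall i, (i < k)%nat -> frechet_deriv H (xi i) u (Dxi i u).

(* ξ_i takes values in E^⊥ near u, hence so does its derivative ξ_i'(u)[d]. *)
Lemma deriv_orth_E (d : H) i : (i < k)%nat -> orth_compl H E (Dxi i u d).
Proof.
  intros Hi e He. rewrite hinner_sym.
  destruct (open_contains_segment H A u d A_open u_in_A) as [r [Hr Hseg]].
  apply (derivable_pt_lim_locally_zero (fun t => hinner e (xi i (hadd u (hscal t d)))) r);
    [exact Hr| |apply frechet_directional_inner; auto].
  intros t Ht. rewrite hinner_sym. apply xi_orth_E; auto.
Qed.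

Hypothesis AC1_holds : AC1 H A C.

(* For z ⟂ E and d ⟂ C_u, differentiating G_z at 0 gives ⟨z, d - Y - X⟩ = 0. *)
Lemma derivative_identity_tested (d z : H) :
  perp H d (C u) -> orth_compl H E z ->
  hinner z d
  - rsum k (fun i => hinner u (Dxi i u d) * hinner z (xi i u)
                     + hinner u (xi i u) * hinner z (Dxi i u d)) = 0.
Proof.
  intros Hperp Hz.
  set (v := fun t => hadd u (hscal t d)).
  set (G := fun t => hinner z (v t)
              - rsum k (fun i => hinner (v t) (xi i (v t)) * hinner z (xi i (v t)))).
  destruct (open_contains_segment H A u d A_open u_in_A) as [r [Hr Hseg]].
  apply (derivable_pt_lim_locally_zero G r); [exact Hr| |].
  - (* G vanishes near 0 since v(t) ∈ C_{v(t)} by (AC1) *)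
    intros t Ht. unfold G.
    rewrite (cone_inner_expansion (v t) (v t) z (Hseg t Ht) (AC1_holds _ (Hseg t Ht)) Hz).
    lra.
  - apply derivable_pt_lim_minus.
    + apply (derivable_pt_lim_ext (fun t => hinner z u + t * hinner z d)).
      { intros t. unfold v. rewrite hinner_add_r, hinner_scal_r; reflexivity. }
      apply derivable_pt_lim_affine.
    + apply (derivable_pt_lim_rsum
               (fun i t => hinner (v t) (xi i (v t)) * hinner z (xi i (v t)))).
      intros i Hi.
      (* product rule; the term ⟨d, ξ_i(u)⟩ vanishes since ξ_i(u) ∈ C_u *)
      replace (hinner u (Dxi i u d) * hinner z (xi i u)
               + hinner u (xi i u) * hinner z (Dxi i u d))
        with ((hinner u (Dxi i u d) + hinner d (xi i u)) * hinner z (xi i (v 0))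
              + hinner (v 0) (xi i (v 0)) * hinner z (Dxi i u d))
        by (unfold v; rewrite hadd_scal_zero, (perp_cone_xi u d i Hi Hperp); ring).
      apply (derivable_pt_lim_mult (fun t => hinner (v t) (xi i (v t)))
                                   (fun t => hinner z (xi i (v t)))).
      * apply frechet_directional_self_inner; auto.
      * apply frechet_directional_inner; auto.
Qed.

Lemma cone_derivative_identity (d : H) :
  perp H d (C u) ->
  hsum k (fun i => hscal (hinner u (xi i u)) (Dxi i u d))
  = hsub d (hsum k (fun i => hscal (hinner u (Dxi i u d)) (xi i u))).
Proof.
  intros Hperp.
  set (X := hsum k (fun i => hscal (hinner u (xi i u)) (Dxi i u d))).
  set (Y := hsum k (fun i => hscal (hinner u (Dxi i u d)) (xi i u))).
  set (w := hsub X (hsub d Y)).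
  assert (Hw_orth : orth_compl H E w).
  { intros e He. unfold w, X, Y.
    rewrite !hinner_sub_l, !hinner_sum_l, (perp_cone_E u d Hperp e He).
    rewrite !rsum_zero; [lra| |].
    - intros i Hi. rewrite hinner_scal_l, xi_orth_E; auto. lra.
    - intros i Hi. rewrite hinner_scal_l, (deriv_orth_E d i Hi e He). lra. }
  (* ⟨w, w⟩ is minus the tested identity at z = w *)
  assert (Hww : hinner w w
                = - (hinner w d
                     - rsum k (fun i => hinner u (Dxi i u d) * hinner w (xi i u)
                                        + hinner u (xi i u) * hinner w (Dxi i u d)))).
  { unfold w at 2. rewrite !hinner_sub_r. unfold X, Y. rewrite !hinner_sum_r, rsum_plus.
    rewrite !(rsum_ext k (fun i => hinner w (hscal _ _)) _ (fun i _ => hinner_scal_r H _ _ _)).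
    ring. }
  rewrite (derivative_identity_tested d w Hperp Hw_orth), Ropp_0 in Hww.
  apply hsub_zero_eq, hinner_def, Hww.
Qed.

End ConeIdentity.

Theorem mainTheorem3 (H : HilbertSpace) (A : H -> Prop) (phi : H -> H)
  (E : H -> Prop) (k : nat) (xi : nat -> H -> H) (Dxi : nat -> H -> H -> H) :
  is_open H A ->
  (forall u, A u -> A (phi u)) ->
  AC3 H A phi E k xi Dxi ->
  AC1 H A (Ccone H E k xi) ->
  forall u d, A u -> perp H d (Ccone H E k xi u) ->
    hsum k (fun i => hscal (hinner u (xi i u)) (Dxi i u d))
    = hsub d (hsum k (fun i => hscal (hinner u (Dxi i u d)) (xi i u))).
Proof.
  intros Hopen _ [[[HE0 _] _] [Hxi [Hpt _]]] HAC1 u d HuA Hperp.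
  apply (cone_derivative_identity H A E k xi Dxi HE0); auto.
  -
    intros v Hv i Hi. apply (proj2 (Hxi i Hi)); exact Hv.
  -
    intros v Hv. exact (proj1 (Hpt v Hv)).
  -
    intros i Hi. apply (proj1 (proj1 (Hxi i Hi))); exact HuA.
Qed.
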